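(* Let $X=(V,E,T)$ be an $(s,k,K)$-two layer system and let $C\subseteq\mathbb{F}_p^V$ be a linear code modelled over $X$ (with constraint set $\mathcal{E}$). Assume that $X$ has the $((\delta,\alpha),\varepsilon_0)$-unique neighbor expansion property. Let $\underline{c}\in\mathbb{F}_p^V$ and let $A(\underline{c})=\{\operatorname{supp}(\underline{e}):\underline{e}\in\mathcal{E},\ \underline{e}\cdot\underline{c}\neq0\}$. If there is $0<\varepsilon<\varepsilon_0$ such that $\frac{w(A(\underline{c}))}{w(E)}\le\varepsilon$ and $A(\underline{c})$ is $(\delta,\alpha)$-locally small, then $\underline{c}\in C$.
   Context: Let $s,k,K$ be positive integers. An $(s,k,K)$-two layer system is a triple $X=(V,E,T)$ where: $V$ is a finite set; $E\subseteq 2^V$ with $|\tau|=k$ for all $\tau\in E$ and $\bigcup_{\tau\in E}\tau=V$; $T\subseteq 2^E$ with $|\sigma|=K$ for all $\sigma\in T$ and $\bigcup_{\sigma\in T}\sigma=E$. Write $v\in\sigma$ ($v\in V,\sigma\in T$) if $v\in\tau$ for some $\tau\in\sigma$; it is required that $2\le|\{\tau\in\sigma:v\in\tau\}|\le s$ for all $\sigma\in T$, $v\in\sigma$. A positive $w:T\to\mathbb{R}_{>0}$ is fixed and extended by $w(\tau)=\sum_{\sigma\ni\tau}w(\sigma)$ ($\tau\in E$), $w(v)=\sum_{\sigma\in T,v\in\sigma}w(\sigma)$, $w(B)=\sum_{\eta\in B}w(\eta)$. For $v\in V$, $E_v=\{\tau\in E:v\in\tau\}$; the link of $v$ is the graph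 on $E_v$ where distinct $\tau_1,\tau_2$ are adjacent iff some $\sigma\in T$ contains both, with weight $m_v(\{\tau_1,\tau_2\})=\sum_{\sigma\in T,\tau_1,\tau_2\in\sigma}w(\sigma)$; $m_v(\tau)$ is the sum of weights of link edges at $\tau$, and $m_v(B)=\sum_{\tau\in B}m_v(\tau)$. For $A\subseteq E$, $A_v=A\cap E_v$. A vertex $v$ is $\mu$-small with respect to $A$ if $m_v(A_v)/m_v(E_v)<\mu$, and $\mu$-large otherwise. A set $A\subseteq E$ is $(\delta,\alpha)$-locally small if $\sum_{v\ \delta\text{-large}}m_v(A_v)\le\alpha\,w(A)$. For constants $0<\delta<1$, $0\le\alpha<1$, $0<\varepsilon_0<1$, $X$ has the $((\delta,\alpha),\varepsilon_0)$-unique neighbor expansion property if every non-empty $A\subseteq E$ with $w(A)/w(E)<\varepsilon_0$ that is $(\delta,\alpha)$-locally small admits $\sigma\in T$ with $|A\cap\sigma|=1$. Codes: $p$ is a prime power and $\mathbb{F}_p$ the field with $p$ elements. For $\underline{e},\underline{c}\in\mathbb{F}_p^V$, $\underline{e}\cdot\underline{c}=\sum_v\underline{e}(v)\underline{c}(v)$ and $\operatorname{supp}(\underline{e})=\{v:\underline{e}(v)\ne0\}$. A linear code $C\subseteq\mathbb{F}_p^V$ is modelled over $X$ if there is a set $\mathcal{E}\subseteq\mathbb{F}_p^V$ (the rows of a check matrix) with $C=\{\underline{c}:\underline{e}\cdot\underline{c}=0\ \forall\underline{e}\in\mathcal{E}\}$, such that $\underline{e}\mapsto\operatorname{supp}(\underline{e})$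 is a bijection $\mathcal{E}\to E$, and there is a set $\mathcal{T}$ of linear dependencies (functions $\operatorname{ld}:\mathcal{E}\to\mathbb{F}_p$ with $\sum_{\underline{e}}\operatorname{ld}(\underline{e})(\underline{e}\cdot\underline{c})=0$ for all $\underline{c}\in\mathbb{F}_p^V$) such that $T=\{\{\operatorname{supp}(\underline{e}):\operatorname{ld}(\underline{e})\neq0\}:\operatorname{ld}\in\mathcal{T}\}$. *)

From HB Require Import structures.
From mathcomp Require Import all_boot all_order all_algebra.
Set Implicit Arguments. Unset Strict Implicit. Unset Printing Implicit Defensive.
Import Order.TTheory GRing.Theory Num.Theory.
Local Open Scope ring_scope.

(* Weights w : {set {set V}} -> R, only used on T. *)

Section TwoLayer.
Variable V : finType.
Variable R : realFieldType.

(* v \in sigma in the paper's sense *)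
Definition vin (v : V) (sigma : {set {set V}}) : bool :=
  [exists tau in sigma, v \in tau].

Definition two_layer_system (s k K : nat) (E : {set {set V}})
    (T : {set {set {set V}}}) : Prop :=
  [/\ (0 < s)%N, (0 < k)%N & (0 < K)%N] /\
  [/\ (forall tau, tau \in E -> #|tau| = k),
      \bigcup_(tau in E) tau = [set: V],
      (forall sigma, sigma \in T -> sigma \subset E /\ #|sigma| = K),
      \bigcup_(sigma in T) sigma = E &
      (forall sigma v, sigma \in T -> vin v sigma ->
         (2 <= #|[set tau in sigma | v \in tau]| <= s)%N)].

Variables (E : {set {set V}}) (T : {set {set {set V}}})
          (w : {set {set V}} -> R).

Definition positive_weight : Prop := forall sigma, sigma \in T -> 0 < w sigma.

Definition w_tau (tau : {set V}) : R := \sum_(sigma in T | tau \in sigma) w sigma.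
Definition w_vert (v : V) : R := \sum_(sigma in T | vin v sigma) w sigma.
Definition w_set (B : {set {set V}}) : R := \sum_(tau in B) w_tau tau.

Definition E_v (v : V) : {set {set V}} := [set tau in E | v \in tau].

(* adjacency in the link of v (taus assumed in E_v) *)
Definition link_adj (tau1 tau2 : {set V}) : bool :=
  (tau1 != tau2) && [exists sigma in T, (tau1 \in sigma) && (tau2 \in sigma)].

Definition m_edge (tau1 tau2 : {set V}) : R :=
  \sum_(sigma in T | (tau1 \in sigma) && (tau2 \in sigma)) w sigma.

Definition m_tau (v : V) (tau : {set V}) : R :=
  \sum_(tau2 in E_v v | link_adj tau tau2) m_edge tau tau2.

Definition m_set (v : V) (B : {set {set V}}) : R :=
  \sum_(tau in B) m_tau v tau.

Definition A_v (A : {set {set V}}) (v : V) := A :&: E_v v.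

Definition mu_small (mu : R) (A : {set {set V}}) (v : V) : bool :=
  m_set v (A_v A v) / m_set v (E_v v) < mu.

Definition locally_small (delta alpha : R) (A : {set {set V}}) : Prop :=
  \sum_(v | ~~ mu_small delta A v) m_set v (A_v A v) <= alpha * w_set A.

Definition unique_neighbor_expansion (delta alpha eps0 : R) : Prop :=
  forall A : {set {set V}}, A \subset E -> A != set0 ->
    w_set A / w_set E < eps0 -> locally_small delta alpha A ->
    exists2 sigma, sigma \in T & #|A :&: sigma| = 1%N.

End TwoLayer.

Section Codes.
Variable V : finType.
Variable F : finFieldType.

Definition dot (e c : {ffun V -> F}) : F := \sum_(v : V) e v * c v.
Definition supp (e : {ffun V -> F}) : {set V} := [set v | e v != 0].

Definition code_of (calE : {set {ffun V -> F}}) : {set {ffun V -> F}} :=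
  [set c | [forall e in calE, dot e c == 0]].

(* ld : calE -> F is represented as a function on all vectors; only its
   values on calE matter. *)
Definition lin_dep (calE : {set {ffun V -> F}}) (ld : {ffun {ffun V -> F} -> F}) : Prop :=
  forall c : {ffun V -> F}, \sum_(e in calE) ld e * dot e c = 0.

Definition modelled_over (E : {set {set V}}) (T : {set {set {set V}}})
    (C : {set {ffun V -> F}}) (calE : {set {ffun V -> F}})
    (calT : {set {ffun {ffun V -> F} -> F}}) : Prop :=
  [/\ C = code_of calE,
      {in calE &, injective supp},
      supp @: calE = E,
      (forall ld, ld \in calT -> lin_dep calE ld) &
      T = [set [set supp e | e in calE & ld e != 0] | ld : {ffun {ffun V -> F} -> F} in calT]].

Definition A_of (calE : {set {ffun V -> F}}) (c : {ffun V -> F}) : {set {set V}} :=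
  [set supp e | e in calE & dot e c != 0].

End Codes.

From HB Require Import structures.
From mathcomp Require Import all_boot all_order all_algebra.
Set Implicit Arguments. Unset Strict Implicit. Unset Printing Implicit Defensive.
Import Order.TTheory GRing.Theory Num.Theory.
Local Open Scope ring_scope.

(* If c is not a codeword, its set A(c) of violated constraints is non-empty,
   lies in E and is small and locally small, so unique neighbor expansion gives
   a sigma in T meeting A(c) in exactly one constraint e.  The linear dependency
   ld behind sigma then has a single non-zero term ld(e) (e . c) in the sum
   sum_e ld(e) (e . c) = 0, which is absurd. *)

Lemma sum_support_card_neq1 (I : finType) (M : nmodType) (A : {set I})
    (f : I -> M) :
  \sum_(i in A) f i = 0 -> #|[set i in A | f i != 0]| != 1%N.
Proof.
move=> sum0; apply/negP => /cards1P [i0 supp_i0].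
have : i0 \in [set i in A | f i != 0] by rewrite supp_i0 set11.
rewrite inE => /andP [i0A fi0_neq0].
move: sum0; rewrite (bigD1 i0) //= big1 ?addr0; first exact/eqP.
move=> i /andP [iA i_neq_i0]; apply/eqP; apply: contraNT i_neq_i0 => fi_neq0.
by rewrite -in_set1 -supp_i0 inE iA.
Qed.

Section ViolatedConstraints.
Variables (V : finType) (F : finFieldType) (calE : {set {ffun V -> F}}).

Lemma A_of_sub (E : {set {set V}}) (c : {ffun V -> F}) :
  @supp V F @: calE = E -> A_of calE c \subset E.
Proof.
move=> <-; apply: imsetS; apply/subsetP => e.
by rewrite inE => /andP [].
Qed.

Lemma A_of_eq0 (c : {ffun V -> F}) :
  (A_of calE c == set0) = (c \in code_of calE).
Proof.
rewrite imset_eq0 inE; apply/eqP/forall_inP => [A0 e eE | dot0].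
  by apply: contraT => dot_neq0; rewrite -(in_set0 e) -A0 inE eE.
by apply/setP => e; rewrite !inE; case: (boolP (e \in calE)) => //= /dot0 ->.
Qed.

Lemma card_A_of_dep_neq1 (ld : {ffun {ffun V -> F} -> F}) (c : {ffun V -> F}) :
  {in calE &, injective (@supp V F)} -> lin_dep calE ld ->
  #|A_of calE c :&: [set supp e | e in calE & ld e != 0]| != 1%N.
Proof.
move=> supp_inj dep.
have sub_calE (P : pred {ffun V -> F}) : {subset [set e in calE | P e] <= calE}.
  by move=> e; rewrite inE => /andP [].
rewrite /A_of -imsetI; last by move=> e e' /sub_calE eE /sub_calE e'E; apply: supp_inj.
have -> : [set e in calE | dot e c != 0] :&: [set e in calE | ld e != 0]
        = [set e in calE | ld e * dot e c != 0].
  by apply/setP => e; rewrite !inE mulf_eq0 negb_or andbACA andbb (andbC (dot e c != 0)).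
have -> : #|[set supp e | e in calE & ld e * dot e c != 0]|
        = #|[set e in calE | ld e * dot e c != 0]|.
  by apply: card_in_imset => e e' /sub_calE eE /sub_calE e'E; apply: supp_inj.
exact: sum_support_card_neq1 (dep c).
Qed.

End ViolatedConstraints.

Theorem lemma3p4 (V : finType) (R : realFieldType) (F : finFieldType)
    (s k K : nat) (E : {set {set V}}) (T : {set {set {set V}}})
    (w : {set {set V}} -> R)
    (C : {set {ffun V -> F}}) (calE : {set {ffun V -> F}})
    (calT : {set {ffun {ffun V -> F} -> F}})
    (delta alpha eps0 : R) (c : {ffun V -> F}) :
  two_layer_system s k K E T ->
  positive_weight T w ->
  modelled_over E T C calE calT ->
  0 < delta < 1 -> 0 <= alpha < 1 -> 0 < eps0 < 1 ->
  unique_neighbor_expansion E T w delta alpha eps0 ->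
  (exists eps : R, [/\ 0 < eps, eps < eps0,
      w_set T w (A_of calE c) / w_set T w E <= eps &
      locally_small E T w delta alpha (A_of calE c)]) ->
  c \in C.
Proof.
move=> _ _ [-> supp_inj supp_calE dep ->] _ _ _ expand [eps [_ lt_eps Aeps Aloc]].
rewrite -A_of_eq0; apply: contraT => A_neq0.
have [_ /imsetP [ld ldT ->]] :=
  expand _ (A_of_sub c supp_calE) A_neq0 (le_lt_trans Aeps lt_eps) Aloc.
by move=> /eqP; rewrite (negbTE (card_A_of_dep_neq1 c supp_inj (dep _ ldT))).
Qed.
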